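(* Let $G=K_{s}^{t}$ with $2\leq t\leq s$ and $n=s+t$, and let $P_{D}(\lambda)=\det(\lambda I-D(G))$. If $s\geq t+1$, then $$P_{D}(\lambda)=(\lambda+1)^{s-t-1}(\lambda+2-\sqrt{2})^{t-1}(\lambda+2+\sqrt{2})^{t-1}\big[\lambda^{3}+(5-s-3t)\lambda^{2}+(6-4s-2t-st)\lambda+2-2s-st\big].$$ If $s=t$, then $$P_{D}(\lambda)=(\lambda+2-\sqrt{2})^{t-1}(\lambda+2+\sqrt{2})^{t-1}\big[\lambda^{2}+(4-4t)\lambda+2-2t-t^{2}\big].$$
   Context: $D(G)$ is the distance matrix of $G$. $K_{s}^{t}$ ($2\le t\le s$) denotes the graph on $n=s+t$ vertices obtained from the complete graph $K_s$ by attaching a pendant edge (a new vertex of degree 1) to each of $t$ distinct vertices of $K_s$. *)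

From mathcomp Require Import all_boot all_order all_algebra.
Set Implicit Arguments. Unset Strict Implicit. Unset Printing Implicit Defensive.
Import Order.TTheory GRing.Theory Num.Theory.
Local Open Scope ring_scope.

Definition walk_ball (T : finType) (e : rel T) (k : nat) (u : T) : {set T} :=
  iter k (fun A : {set T} => A :|: [set y | [exists x in A, e x y]]) [set u].

(* Graph distance: least k such that v is within k steps of u
   (equals #|T| if v is unreachable; irrelevant for connected graphs). *)
Definition gdist (T : finType) (e : rel T) (u v : T) : nat :=
  find (fun k => v \in walk_ball e k u) (iota 0 #|T|).

Definition dist_matrix (R : nzRingType) (n : nat) (e : rel 'I_n) : 'M[R]_n :=
  \matrix_(i, j) (gdist e i j)%:R.

(* K_s^t on vertices {0,...,s+t-1}: vertices 0..s-1 form K_s, and for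
   j < t vertex s+j is a pendant vertex attached to vertex j. *)
Arguments dist_matrix : clear implicits.
Definition Kst_adj (s t : nat) : rel 'I_(s + t) :=
  fun u v =>
    [|| [&& (val u < s)%N, (val v < s)%N & val u != val v],
        [&& (val u < t)%N & val v == (val u + s)%N] |
        [&& (val v < t)%N & val u == (val v + s)%N] ].
Arguments Kst_adj : clear implicits.

From mathcomp Require Import all_boot all_order all_algebra.
From mathcomp Require Import zify ring.
Import Order.TTheory GRing.Theory Num.Theory.
Set Implicit Arguments. Unset Strict Implicit. Unset Printing Implicit Defensive.

(* Off the t pendant edges {j, s + j}, the distance between
   u and v is 1 + [u is pendant] + [v is pendant], so for x > 0
   xI - D = A - U B, where U B has rank 2 and A is block diagonal: t blocks
   [[x+1, 1], [1, x+3]] of determinant q = x^2 + 4x + 2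
   = (x + 2 - sqrt 2)(x + 2 + sqrt 2), and s - t scalars x + 1.  The matrix
   determinant lemma gives det (xI - D) = (x+1)^(s-t) q^t det (I - B A^-1 U),
   and (x+1) q det (I - B A^-1 U) is the cubic factor, which for s = t splits
   off x + 1.  Polynomials that agree at every x > 0 are equal. *)

Lemma find_iota_threshold (p : pred nat) m N :
  (m < N)%N -> (forall k, p k = (m <= k)%N) -> find p (iota 0 N) = m.
Proof.
move=> lt_mN pE; rewrite -(subnKC (ltnW lt_mN)) iotaD find_cat size_iota add0n.
have -> : has p (iota 0 m) = false.
  by apply/negbTE/hasPn => k; rewrite mem_iota pE add0n -ltnNge => /andP[].
by rewrite -[(N - m)%N]prednK ?subn_gt0 //= pE leqnn addn0.
Qed.

Definition kst_class (s w : nat) : nat := if (w < s)%N then w else (w - s)%N.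

Definition kst_dist (s u v : nat) : nat :=
  if u == v then 0 else if kst_class s u == kst_class s v then 1
  else ((s <= u) + (s <= v)).+1.

Lemma kst_class_small s k : (k < s)%N -> kst_class s k = k.
Proof. by rewrite /kst_class => ->. Qed.

Lemma kst_class_pendant s k : (s <= k)%N -> kst_class s k = (k - s)%N.
Proof. by rewrite /kst_class ltnNge => ->. Qed.

Lemma kst_class_lt s t k : (t <= s)%N -> (k < s + t)%N -> (kst_class s k < s)%N.
Proof. by rewrite /kst_class; case: ifP; lia. Qed.

Lemma kst_class_addn s k : kst_class s (k + s) = k.
Proof. by rewrite kst_class_pendant ?leq_addl ?addnK. Qed.

Section KstDistance.
Variables s t : nat.
Hypothesis t_le_s : (t <= s)%N.

Lemma kst_dist_le3 (u v : 'I_(s + t)) : (kst_dist s u v <= 3)%N.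
Proof.
rewrite /kst_dist; case: ifP => // _; case: ifP => // _.
by case: (s <= u)%N; case: (s <= v)%N.
Qed.

Lemma kst_dist_adj (u x v : 'I_(s + t)) :
  Kst_adj s t x v -> (kst_dist s u v <= kst_dist s u x + 1)%N.
Proof.
have := ltn_ord u; have := ltn_ord x; have := ltn_ord v.
rewrite /Kst_adj /kst_dist /kst_class /=.
case: (leqP s u); case: (leqP s x); case: (leqP s v); repeat case: ifP; lia.
Qed.

Lemma kst_dist_prev (u v : 'I_(s + t)) : u != v ->
  exists2 x : 'I_(s + t), Kst_adj s t x v & kst_dist s u x + 1 = kst_dist s u v.
Proof.
rewrite -val_eqE /= => neq_uv.
pose x := if kst_class s u == kst_class s v then nat_of_ord u
  else if (s <= v)%N then (v - s)%N else if (s <= u)%N then (u - s)%N else nat_of_ord u.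
have u_lt := ltn_ord u; have v_lt := ltn_ord v.
have x_lt : (x < s + t)%N.
  by rewrite /x /kst_class; case: (leqP s u); case: (leqP s v); repeat case: ifP; lia.
exists (Ordinal x_lt); move: x_lt;
  rewrite /Kst_adj /kst_dist /x /kst_class /=;
  case: (leqP s u); case: (leqP s v); repeat case: ifP; lia.
Qed.

Lemma walk_ball_Kst k (u v : 'I_(s + t)) :
  (v \in walk_ball (Kst_adj s t) k u) = (kst_dist s u v <= k)%N.
Proof.
elim: k v => [|k IHk] v.
  rewrite /walk_ball /= inE /kst_dist -val_eqE /= eq_sym.
  by case: ifP => // _; case: ifP.
rewrite /walk_ball iterS -/(walk_ball _ k u) !inE IHk.
apply/idP/idP.
- case/orP => [/leqW //|/existsP [x /andP [x_in xv]]].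
  rewrite IHk in x_in; have := kst_dist_adj u xv; lia.
- move=> le_k1; case: (leqP (kst_dist s u v) k) => [//|lt_k].
  have neq_uv : u != v.
    by apply: contraTneq lt_k => ->; rewrite /kst_dist eqxx.
  have [x xv dx] := kst_dist_prev neq_uv.
  by apply/orP; right; apply/existsP; exists x; rewrite IHk xv andbT; lia.
Qed.

Lemma gdist_Kst (u v : 'I_(s + t)) : (2 <= t)%N ->
  gdist (Kst_adj s t) u v = kst_dist s u v.
Proof.
move=> t_ge2; rewrite /gdist card_ord; apply: find_iota_threshold => [|k].
  by have := kst_dist_le3 u v; lia.
exact: walk_ball_Kst.
Qed.
End KstDistance.

Local Open Scope ring_scope.

Lemma det_sub_mul_lowrank (R : comPzRingType) n m (A : 'M[R]_n)
    (U Y : 'M[R]_(n, m)) (B : 'M[R]_(m, n)) :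
  A *m Y = U -> \det (A - U *m B) = \det A * \det (1%:M - B *m Y).
Proof.
move=> AY.
have fact1 : block_mx A U B 1%:M
    = block_mx 1%:M U 0 1%:M *m block_mx (A - U *m B) 0 B 1%:M.
  by rewrite mulmx_block !(mul1mx, mul0mx, mulmx0, mulmx1, add0r, addr0) subrK.
have fact2 : block_mx A U B 1%:M
    = block_mx A 0 B (1%:M - B *m Y) *m block_mx 1%:M Y 0 1%:M.
  rewrite mulmx_block !(mul1mx, mul0mx, mulmx0, mulmx1, add0r, addr0) AY.
  by rewrite addrC subrK.
have := congr1 determinant fact1.
rewrite fact2 !det_mulmx det_ublock det_lblock det_ublock det_lblock !det1.
by rewrite !mulr1 mul1r.
Qed.

Lemma det_mx2 (R : comPzRingType) (M : 'M[R]_2) :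
  \det M = M 0 0 * M 1 1 - M 0 1 * M 1 0.
Proof.
rewrite (expand_det_row _ 0) !big_ord_recl big_ord0 /cofactor !det_mx11 !mxE /=.
rewrite /bump /= addr0 expr0 expr1 !mul1r mulN1r mulrN.
by congr (M _ _ * M _ _ - M _ _ * M _ _); apply: val_inj.
Qed.

Lemma horner_char_poly (R : comNzRingType) n (M : 'M[R]_n) (x : R) :
  (char_poly M).[x] = \det (x%:M - M).
Proof.
rewrite /char_poly -horner_evalE -det_map_mx; congr (\det _).
apply/matrixP => i j; rewrite !mxE rmorphB rmorphMn /= !horner_evalE.
by rewrite hornerX hornerC.
Qed.

Lemma poly_eq_on_pos (R : numDomainType) (p q : {poly R}) :
  (forall x : R, 0 < x -> p.[x] = q.[x]) -> p = q.
Proof.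
move=> pq; apply/eqP; rewrite -subr_eq0; apply/eqP.
apply: (@roots_geq_poly_eq0 _ _ [seq i.+1%:R | i <- iota 0 (size (p - q))]).
- apply/allP => _ /mapP [i _ ->].
  by rewrite /root hornerD hornerN pq ?subrr ?ltr0Sn.
- by rewrite map_inj_uniq ?iota_uniq // => i j /eqP; rewrite eqr_nat => /eqP [].
- by rewrite size_map size_iota.
Qed.

Section SumsOverVertices.
Variable V : nmodType.
Variables s t : nat.
Hypothesis t_le_s : (t <= s)%N.

Lemma sum_kst_class (g : nat -> V) m : (m < s)%N ->
  (forall k, (k < s + t)%N -> kst_class s k != m -> g k = 0) ->
  \sum_(k < s + t) g k = g m + (if (m < t)%N then g (m + s)%N else 0).
Proof.
move=> m_lt g0; have m_lt' : (m < s + t)%N by lia.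
rewrite (bigD1 (Ordinal m_lt')) //=; congr (_ + _).
case: ifP => m_lt_t.
  have ms_lt : (m + s < s + t)%N by lia.
  rewrite (bigD1 (Ordinal ms_lt)) /=; last by rewrite -val_eqE /=; lia.
  rewrite big1 ?addr0 // => k /andP [k1 k2]; apply: g0 => //.
  by move: k1 k2; rewrite -!val_eqE /= /kst_class; case: ifP; lia.
rewrite big1 // => k k1; apply: g0 => //.
by have := ltn_ord k; move: k1; rewrite -!val_eqE /= /kst_class; case: ifP; lia.
Qed.

Lemma sum_kst_kinds (g : nat -> V) a b c :
  (forall k, (k < s + t)%N ->
     g k = if (k < t)%N then a else if (k < s)%N then b else c) ->
  \sum_(k < s + t) g k = a *+ t + b *+ (s - t) + c *+ t.
Proof.
move=> gE; rewrite -(big_mkord xpredT g) (big_cat_nat (n := t)) ?leq_addl //=.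
rewrite (big_cat_nat (m := t) (n := s) (p := s + t)) ?leq_addr //= addrA.
rewrite (@eq_big_nat _ _ _ 0 t g (fun=> a)); last first.
  by move=> k k_lt; rewrite gE; [case: ifP => //; lia | lia].
rewrite (@eq_big_nat _ _ _ t s g (fun=> b)); last first.
  by move=> k k_lt; rewrite gE; [repeat case: ifP => //; lia | lia].
rewrite (@eq_big_nat _ _ _ s (s + t) g (fun=> c)); last first.
  by move=> k k_lt; rewrite gE; [repeat case: ifP => //; lia | lia].
by rewrite !sumr_const_nat subn0 addKn.
Qed.
End SumsOverVertices.

Lemma prod_core_pendant (S : comPzSemiRingType) s t (g : nat -> S) a b :
  (forall k, (k < s + t)%N -> g k = if (k < s)%N then a else b) ->
  \prod_(k < s + t) g k = a ^+ s * b ^+ t.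
Proof.
move=> gE; rewrite -(big_mkord xpredT g) (big_cat_nat (n := s)) ?leq_addr //=.
rewrite (@eq_big_nat _ _ _ 0 s g (fun=> a)); last first.
  by move=> k k_lt; rewrite gE; [case: ifP => //; lia | lia].
rewrite (@eq_big_nat _ _ _ s (s + t) g (fun=> b)); last first.
  by move=> k k_lt; rewrite gE; [case: ifP => //; lia | lia].
by rewrite !prodr_const_nat subn0 addKn.
Qed.

Definition kst_cubic (R : nzRingType) (s t : nat) : {poly R} :=
  'X ^+ 3 + (5 - s%:R - 3 * t%:R)%:P * 'X ^+ 2
  + (6 - 4 * s%:R - 2 * t%:R - s%:R * t%:R)%:P * 'X
  + (2 - 2 * s%:R - s%:R * t%:R)%:P.

Section DistanceMatrixDecomposition.
Variable R : numFieldType.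
Variables (s t : nat) (x : R).
Hypothesis t_ge2 : (2 <= t)%N.
Hypothesis t_le_s : (t <= s)%N.
Hypothesis x_gt0 : 0 < x.

Let q := x * x + 4 * x + 2.

Let q_neq0 : q != 0.
Proof. by rewrite lt0r_neq0 // !addr_gt0 // mulr_gt0. Qed.

Let x1_neq0 : x + 1 != 0.
Proof. by rewrite lt0r_neq0 // addr_gt0. Qed.

(* Ymx = A^-1 U, computed blockwise from the inverse (1/q) [[x+3, -1], [-1, x+1]]
   of the 2 x 2 blocks; Lmx clears the upper entry of each block, making A L
   lower triangular. *)
Definition A_entry (u v : nat) : R :=
  if u == v then x + (if (u < s)%N then 1 else 3)
  else if kst_class s u == kst_class s v then 1 else 0.
Definition U_entry (u j : nat) : R :=
  if j == 0%N then (if (u < s)%N then 1 else 0) else (if (u < s)%N then 0 else 1).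
Definition B_entry (i v : nat) : R :=
  if i == 0%N then (if (v < s)%N then 1 else 2) else (if (v < s)%N then 2 else 3).
Definition Y_entry (u j : nat) : R :=
  if j == 0%N then
    (if (u < t)%N then (x + 3) / q else if (u < s)%N then 1 / (x + 1) else - 1 / q)
  else (if (u < t)%N then - 1 / q else if (u < s)%N then 0 else (x + 1) / q).
Definition L_entry (u v : nat) : R :=
  if u == v then 1 else if (s <= v)%N && (u == v - s)%N then - 1 / (x + 1) else 0.
Definition AL_entry (u v : nat) : R :=
  if u == v then (if (u < s)%N then x + 1 else q / (x + 1))
  else if (v < u)%N && (kst_class s u == kst_class s v) then 1 else 0.

Definition Amx : 'M[R]_(s + t) := \matrix_(u, v) A_entry u v.
Definition Umx : 'M[R]_(s + t, 2) := \matrix_(u, j) U_entry u j.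
Definition Bmx : 'M[R]_(2, s + t) := \matrix_(i, v) B_entry i v.
Definition Ymx : 'M[R]_(s + t, 2) := \matrix_(u, j) Y_entry u j.
Definition Lmx : 'M[R]_(s + t) := \matrix_(u, v) L_entry u v.

Lemma xI_sub_dist_matrix :
  x%:M - dist_matrix R (s + t) (Kst_adj s t) = Amx - Umx *m Bmx.
Proof.
apply/matrixP => u v; rewrite !mxE gdist_Kst // !big_ord_recl big_ord0 !mxE /=.
rewrite mulrb -[u == v]val_eqE /A_entry /U_entry /B_entry /kst_dist /=.
move: (nat_of_ord u) (nat_of_ord v) => a b.
rewrite /kst_class; case: (ltnP a s) => ?; case: (ltnP b s) => ? /=;
  repeat case: ifP => ? //=; try (exfalso; lia); ring.
Qed.

Ltac kst_cases a b :=
  case: (ltnP a s) => ?;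
    [rewrite ?(kst_class_small (k := a)) //
    | have ? : (a - s < s)%N by [lia];
      rewrite ?(kst_class_pendant (k := a)) // ?(kst_class_small (k := (a - s)%N)) //];
  (case: (ltnP b s) => ?;
    [rewrite ?(kst_class_small (k := b)) //
    | have ? : (b - s < s)%N by [lia];
      rewrite ?(kst_class_pendant (k := b)) // ?(kst_class_small (k := (b - s)%N)) //]);
  repeat case: ifP => ? //=; try (exfalso; lia);
  try (rewrite /q; field; rewrite ?q_neq0 ?x1_neq0; done).

Lemma mulmx_AY : Amx *m Ymx = Umx.
Proof.
apply/matrixP => u j; rewrite !mxE; under eq_bigr do rewrite !mxE.
have u_lt := ltn_ord u; have j_lt := ltn_ord j.
rewrite (@sum_kst_class _ s t t_le_s (fun k => A_entry u k * Y_entry k j)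
  (kst_class s u)).
- rewrite /A_entry /Y_entry /U_entry ?kst_class_addn.
  move: (nat_of_ord u) (nat_of_ord j) u_lt j_lt => a [|[|//]] ? _;
    kst_cases a a.
- exact: kst_class_lt t_le_s (ltn_ord u).
- move=> k _ ne; rewrite /A_entry; case: eqP => [uk|_]; first by rewrite uk eqxx in ne.
  by rewrite eq_sym (negbTE ne) mul0r.
Qed.

Lemma mulmx_AL (u v : 'I_(s + t)) : (Amx *m Lmx) u v = AL_entry u v.
Proof.
rewrite !mxE; under eq_bigr do rewrite !mxE.
have v_lt := ltn_ord v.
rewrite (@sum_kst_class _ s t t_le_s (fun k => A_entry u k * L_entry k v)
  (kst_class s v)).
- rewrite /A_entry /L_entry /AL_entry ?kst_class_addn.
  move: (nat_of_ord u) (nat_of_ord v) (ltn_ord u) v_lt => a b ? ?;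
    kst_cases a b.
- exact: kst_class_lt t_le_s v_lt.
- move=> k _ ne; rewrite /L_entry; case: eqP => [kv|_]; first by rewrite kv eqxx in ne.
  case: ifP => [/andP [v_pend /eqP kE]|_]; last by rewrite mulr0.
  have v_s_lt : (v - s < s)%N by lia.
  by move: ne; rewrite kE (kst_class_pendant v_pend) (kst_class_small v_s_lt) eqxx.
Qed.

Lemma det_Amx : \det Amx = (x + 1) ^+ (s - t) * q ^+ t.
Proof.
have det_L : \det Lmx = 1.
  rewrite -det_tr det_trig; last first.
    apply/is_trig_mxP => i j lt_ij; rewrite !mxE /L_entry.
    case: ifP => [/eqP ij|_]; first by move: lt_ij; rewrite ij ltnn.
    by case: ifP => // /andP [_ /eqP ij]; move: lt_ij; rewrite ij; lia.
  by rewrite big1 // => i _; rewrite !mxE /L_entry eqxx.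
have := det_mulmx Amx Lmx; rewrite det_L mulr1 => <-.
rewrite det_trig; last first.
  apply/is_trig_mxP => i j lt_ij; rewrite mulmx_AL /AL_entry.
  case: ifP => [/eqP ij|_]; first by move: lt_ij; rewrite ij ltnn.
  by case: ifP => // /andP [ji _]; lia.
rewrite (eq_bigr (fun k : 'I_(s + t) => AL_entry k k)); last first.
  by move=> i _; rewrite mulmx_AL.
rewrite (@prod_core_pendant _ s t (fun k => AL_entry k k) (x + 1) (q / (x + 1)));
  last first.
  by move=> k _; rewrite /AL_entry eqxx.
by rewrite -{1}(subnK t_le_s) exprD -mulrA -exprMn [(x + 1) * _]mulrC divfK.
Qed.

Definition G_entry (i j : nat) : R :=
  (if i == 0%N then 1 else 2) * (if j == 0%N then (x + 3) / q else - 1 / q) * t%:R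
  + (if i == 0%N then 1 else 2) * (if j == 0%N then 1 / (x + 1) else 0) * (s - t)%:R
  + (if i == 0%N then 2 else 3) * (if j == 0%N then - 1 / q else (x + 1) / q) * t%:R.

Lemma mulmx_BY (i j : 'I_2) : (Bmx *m Ymx) i j = G_entry i j.
Proof.
rewrite !mxE; under eq_bigr do rewrite !mxE.
rewrite (@sum_kst_kinds _ s t t_le_s (fun k => B_entry i k * Y_entry k j)
  ((if nat_of_ord i == 0%N then 1 else 2)
    * (if nat_of_ord j == 0%N then (x + 3) / q else - 1 / q))
  ((if nat_of_ord i == 0%N then 1 else 2)
    * (if nat_of_ord j == 0%N then 1 / (x + 1) else 0))
  ((if nat_of_ord i == 0%N then 2 else 3)
    * (if nat_of_ord j == 0%N then - 1 / q else (x + 1) / q))).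
  by rewrite /G_entry !mulr_natr.
by move=> k _; rewrite /B_entry /Y_entry; repeat case: ifP => ? //=; lia.
Qed.

Lemma det_xI_sub_dist_matrix :
  \det (x%:M - dist_matrix R (s + t) (Kst_adj s t))
  = (x + 1) ^+ (s - t) * q ^+ t
    * ((1 - G_entry 0 0) * (1 - G_entry 1 1) - G_entry 0 1 * G_entry 1 0).
Proof.
have BYE i j : (1%:M - Bmx *m Ymx) i j = (i == j)%:R - G_entry i j.
  by rewrite -mulmx_BY !mxE.
rewrite xI_sub_dist_matrix (det_sub_mul_lowrank _ mulmx_AY) det_Amx det_mx2 !BYE /=.
by rewrite !sub0r mulrNN.
Qed.

Lemma horner_kst_cubic : (kst_cubic R s t).[x]
  = (x + 1) * q * ((1 - G_entry 0 0) * (1 - G_entry 1 1) - G_entry 0 1 * G_entry 1 0).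
Proof.
rewrite /kst_cubic !hornerE /G_entry /q natrB //=.
by field; rewrite q_neq0 x1_neq0.
Qed.
End DistanceMatrixDecomposition.

Lemma kst_cubic_diag (R : comNzRingType) t :
  kst_cubic R t t
  = ('X + 1) * ('X ^+ 2 + (4 - 4 * t%:R)%:P * 'X + (2 - 2 * t%:R - t%:R ^+ 2)%:P).
Proof.
by rewrite /kst_cubic !(rmorphB, rmorphD, rmorphM, rmorphXn, rmorph_nat) /=; ring.
Qed.

Lemma sqrt2_shift_mul (R : rcfType) (y : R) :
  (y + (2 - Num.sqrt 2)) * (y + (2 + Num.sqrt 2)) = y * y + 4 * y + 2.
Proof.
have sqrt2_sq : Num.sqrt (2 : R) ^+ 2 = 2 by rewrite sqr_sqrtr // ler0n.
apply/eqP; rewrite -subr_eq0.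
have -> : (y + (2 - Num.sqrt 2)) * (y + (2 + Num.sqrt 2)) - (y * y + 4 * y + 2)
    = 2 - Num.sqrt 2 ^+ 2 by ring.
by rewrite sqrt2_sq subrr.
Qed.

Lemma mulX1_char_poly_Kst (R : rcfType) s t : (2 <= t)%N -> (t <= s)%N ->
  ('X + 1) * char_poly (dist_matrix R (s + t) (Kst_adj s t))
  = ('X + 1) ^+ (s - t) * ('X + (2 - Num.sqrt 2)%:P) ^+ (t - 1)
    * ('X + (2 + Num.sqrt 2)%:P) ^+ (t - 1) * kst_cubic R s t.
Proof.
move=> t_ge2 t_le_s; apply: poly_eq_on_pos => y y_gt0.
rewrite -polyC1 !hornerM horner_char_poly (det_xI_sub_dist_matrix t_ge2 t_le_s y_gt0).
rewrite horner_kst_cubic // !(horner_exp, hornerD, hornerX, hornerC).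
have exprt (z : R) : z ^+ t = z ^+ (t - 1) * z.
  by rewrite -exprSr subn1 prednK // ltnW.
rewrite -[in RHS](mulrA ((y + 1) ^+ (s - t))) -exprMn sqrt2_shift_mul exprt.
ring.
Qed.

Theorem lemma3p1 (R : rcfType) (s t : nat) :
  (2 <= t)%N -> (t <= s)%N ->
  let P := char_poly (dist_matrix R (s + t) (Kst_adj s t)) in
  ((t + 1 <= s)%N ->
    P = ('X + 1) ^+ (s - t - 1)
        * ('X + (2 - Num.sqrt 2)%:P) ^+ (t - 1)
        * ('X + (2 + Num.sqrt 2)%:P) ^+ (t - 1)
        * ('X ^+ 3 + (5 - s%:R - 3 * t%:R)%:P * 'X ^+ 2
           + (6 - 4 * s%:R - 2 * t%:R - s%:R * t%:R)%:P * 'X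
           + (2 - 2 * s%:R - s%:R * t%:R)%:P)) /\
  (s = t ->
    P = ('X + (2 - Num.sqrt 2)%:P) ^+ (t - 1)
        * ('X + (2 + Num.sqrt 2)%:P) ^+ (t - 1)
        * ('X ^+ 2 + (4 - 4 * t%:R)%:P * 'X + (2 - 2 * t%:R - t%:R ^+ 2)%:P)).
Proof.
move=> t_ge2 t_le_s P; have key := mulX1_char_poly_Kst R t_ge2 t_le_s.
have X1_neq0 : ('X + 1 : {poly R}) != 0 by rewrite -polyC1 monic_neq0 ?monicXaddC.
split=> [t_lt_s | s_eq_t]; apply: (mulfI X1_neq0); rewrite key.
- rewrite -/(kst_cubic R s t) (_ : _ ^+ (s - t) = ('X + 1) * ('X + 1) ^+ (s - t - 1)).
    by rewrite !mulrA.
  by rewrite -exprS; congr (_ ^+ _); lia.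
- by subst s; rewrite subnn expr0 mul1r kst_cubic_diag mulrCA.
Qed.
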